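(* Let $r\ge1$ and let $\mathbf{Y}^r$ be the $r$-fold Cartesian product of Young's lattice, with $p_n$ its number of rank-$n$ elements ($p_k=0$ for $k<0$, $\Delta p_n=p_n-p_{n-1}$). Then for every $n\ge1$ and $1\le j\le n$, $\Delta p_n\ge\Delta p_{n-j-\delta_{r,1}}$ (that is, $\Delta p_n\ge\Delta p_{n-j-1}$ if $r=1$ and $\Delta p_n\ge\Delta p_{n-j}$ if $r\ge2$).
   Context: Young's lattice $\mathbf{Y}$ is the set of all integer partitions ordered by inclusion of Ferrers (Young) diagrams, graded by the size of the partition; it is a $1$-differential poset. $\mathbf{Y}^r$ carries the componentwise order and the rank is the total size; it is $r$-differential. $\delta_{r,1}$ is the Kronecker delta. *)

From mathcomp Require Import all_boot all_order all_algebra.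
Set Implicit Arguments. Unset Strict Implicit. Unset Printing Implicit Defensive.

(* A Young diagram (integer partition) of size m <= n has at most n parts,
   each at most n.  We encode it as its weakly decreasing list of parts,
   padded with zeros to length exactly n: an n-tuple of 'I_n.+1.
   This is a bijection between partitions of size <= n and nonincreasing
   n-tuples over 'I_n.+1, so the set below is exactly the set of elements
   of rank n of Y^r (r-tuples of partitions whose sizes sum to n). *)
Definition padded_partition (n : nat) (t : n.-tuple 'I_n.+1) : bool :=
  sorted geq (map val t).

Definition psize (n : nat) (t : n.-tuple 'I_n.+1) : nat := sumn (map val t).

Definition Yr_rank (r n : nat) : {set {ffun 'I_r -> n.-tuple 'I_n.+1}} :=
  [set f : {ffun 'I_r -> n.-tuple 'I_n.+1} | [forall i, padded_partition (f i)] && (\sum_(i < r) psize (f i) == n)].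

Definition pY (r n : nat) : nat := #|Yr_rank r n|.

Definition pZ (r : nat) (k : int) : int :=
  match k with Posz m => (pY r m)%:Z | Negz _ => 0%R end.

Definition dpZ (r : nat) (k : int) : int := (pZ r k - pZ r (k - 1))%R.

From mathcomp Require Import all_boot all_order all_algebra zify.
Import Order.TTheory GRing.Theory Num.Theory.
Set Implicit Arguments. Unset Strict Implicit. Unset Printing Implicit Defensive.

(** Write elements of Y^r as families of r partitions, and single out the first
    component.  Appending a part 1 to it is a bijection from rank n-1 onto the
    rank-n families whose first partition has a part 1, so Delta p_n counts the
    rank-n families whose first partition has no part 1.  For r >= 2, appending a
    part 1 to another component injects rank k into rank k+1 preserving this
    property, hence Delta p is nondecreasing.  For r = 1, Delta p_n counts
    partitions of n without 1s: enlarging the largest part injects rank k into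
    rank k+1 for k >= 1, Delta p_0 = 1 <= Delta p_n for n >= 2 (witness: the
    partition (n)), and Delta p vanishes at negative indices. *)

Definition is_partition (s : seq nat) : bool := sorted geq s && all (leq 1) s.

Lemma geq_trans : transitive geq.
Proof. exact: rev_trans leq_trans. Qed.

Lemma nth_le_sumn s i : nth 0 s i <= sumn s.
Proof.
elim: s i => [|x s IH] [|i] //=; first exact: leq_addr.
exact: leq_trans (IH i) (leq_addl _ _).
Qed.

Lemma size_le_sumn s : all (leq 1) s -> size s <= sumn s.
Proof. by elim: s => //= x s IH /andP[x_gt0 /IH]; lia. Qed.

Lemma cat_filter_pos_nseq0 s :
  sorted geq s -> filter (leq 1) s ++ nseq (size s - size (filter (leq 1) s)) 0 = s.
Proof.
elim: s => //= x s IH x_s; have /IH {}IH := path_sorted x_s.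
case: x x_s => [|x] x_s /=; last by rewrite subSS IH.
have s0 : s = nseq (size s) 0.
  apply/all_pred1P/allP => y /(allP (order_path_min geq_trans x_s)).
  by rewrite /= leqn0.
by rewrite s0 filter_nseq /= size_nseq.
Qed.

Lemma nth_cat_nseq0 s k i : nth 0 (s ++ nseq k 0) i = nth 0 s i.
Proof.
rewrite nth_cat; case: ltnP => // le_s_i.
by rewrite nth_nseq nth_default //; case: ifP.
Qed.

Lemma nth_filter_pos s i : sorted geq s -> nth 0 (filter (leq 1) s) i = nth 0 s i.
Proof. by move/cat_filter_pos_nseq0=> {2}<-; rewrite nth_cat_nseq0. Qed.

Lemma is_partition_rcons1 s : is_partition s -> is_partition (rcons s 1).
Proof.
case/andP=> s_sorted s_pos; rewrite /is_partition all_rcons s_pos andbT.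
case: s s_sorted s_pos => // x s x_s x_s_pos.
by rewrite /= rcons_path [path _ _ _]x_s /= andbT (allP x_s_pos _ (mem_last x s)).
Qed.

Lemma is_partition_rconsK s x : is_partition (rcons s x) -> is_partition s.
Proof.
case/andP=> s_sorted; rewrite all_rcons => /andP[_ s_pos].
rewrite /is_partition s_pos andbT.
exact: (subseq_sorted geq_trans (subseq_rcons s x) s_sorted).
Qed.

Lemma is_partition_incr_head x s : is_partition (x :: s) -> is_partition (x.+1 :: s).
Proof.
case/andP=> /= x_s /andP[_ s_pos]; rewrite /is_partition /= s_pos andbT.
by case: s x_s {s_pos} => //= y s /andP[y_le_x ->]; rewrite andbT ltnW.
Qed.

Section PaddedPartition.
Variable n : nat.
Implicit Types (t : n.-tuple 'I_n.+1) (s : seq nat).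

Definition parts_of t : seq nat := filter (leq 1) (map val t).

Definition padded s : n.-tuple 'I_n.+1 := [tuple inord (nth 0 s i) | i < n].

Lemma parts_of_partition t : padded_partition t -> is_partition (parts_of t).
Proof.
move=> t_sorted; rewrite /is_partition filter_all andbT.
exact: (sorted_filter geq_trans _ t_sorted).
Qed.

Lemma sumn_parts_of t : sumn (parts_of t) = psize t.
Proof. by rewrite /parts_of /psize; elim: (map val t) => //= -[|x] s /= ->. Qed.

Lemma map_val_padded s :
  all (leq 1) s -> sumn s <= n -> map val (padded s) = s ++ nseq (n - size s) 0.
Proof.
move=> s_pos s_le_n; have := leq_trans (size_le_sumn s_pos) s_le_n.
move=> size_s; apply: (@eq_from_nth _ 0).
  by rewrite size_map size_tuple size_cat size_nseq; lia.
move=> i; rewrite size_map size_tuple => lt_i_n.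
rewrite (nth_map ord0) ?size_tuple // (_ : nth _ _ i = tnth (padded s) (Ordinal lt_i_n)).
  2: by rewrite (tnth_nth ord0).
rewrite tnth_mktuple /= inordK; last exact: leq_trans (nth_le_sumn s i) s_le_n.
by rewrite nth_cat_nseq0.
Qed.

Lemma parts_ofK t : padded_partition t -> padded (parts_of t) = t.
Proof.
move=> t_sorted; apply: eq_from_tnth => i.
rewrite tnth_mktuple nth_filter_pos // (nth_map ord0) ?size_tuple //.
by rewrite -tnth_nth inord_val.
Qed.

Lemma padded_partition_padded s :
  is_partition s -> sumn s <= n -> padded_partition (padded s).
Proof.
case/andP=> s_sorted s_pos s_le_n; rewrite /padded_partition map_val_padded //.
have zeros y k : path geq y (nseq k 0).
  by elim: k y => //= k IH y; rewrite IH andbT.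
case: s s_sorted {s_pos s_le_n} => [|x s] s_sorted.
  by case: n => //= m; rewrite zeros.
by rewrite /= cat_path [path _ _ _]s_sorted zeros.
Qed.

Lemma psize_padded s : all (leq 1) s -> sumn s <= n -> psize (padded s) = sumn s.
Proof.
by move=> s_pos s_le_n; rewrite /psize map_val_padded // sumn_cat sumn_nseq addn0.
Qed.

Lemma paddedK s : all (leq 1) s -> sumn s <= n -> parts_of (padded s) = s.
Proof.
move=> s_pos s_le_n; rewrite /parts_of map_val_padded // filter_cat filter_nseq.
by rewrite cats0; apply/all_filterP.
Qed.

End PaddedPartition.

Section Families.
Variable r : nat.
Local Notation family := {ffun 'I_r -> seq nat}.
Implicit Types (F G : family) (P Q : pred family).

Definition family_of_rank k F : bool :=
  [forall i, is_partition (F i)] && (\sum_(i < r) sumn (F i) == k).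

Definition family_of n (f : {ffun 'I_r -> n.-tuple 'I_n.+1}) : family :=
  [ffun i => parts_of (f i)].

Definition padded_family n F : {ffun 'I_r -> n.-tuple 'I_n.+1} :=
  [ffun i => padded n (F i)].

Lemma family_of_rank_part k F i : family_of_rank k F -> is_partition (F i).
Proof. by case/andP=> /forallP. Qed.

Lemma sumn_le_rank k F i : family_of_rank k F -> sumn (F i) <= k.
Proof. by case/andP=> _ /eqP <-; rewrite (bigD1 i) //= leq_addr. Qed.

Lemma family_of_rank_of n f : f \in Yr_rank r n -> family_of_rank n (family_of f).
Proof.
rewrite inE => /andP[/forallP f_part /eqP f_sum]; apply/andP; split.
  by apply/forallP => i; rewrite ffunE parts_of_partition.
by rewrite -[X in _ == X]f_sum; apply/eqP/eq_bigr => i _; rewrite ffunE sumn_parts_of.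
Qed.

Lemma family_ofK n f : f \in Yr_rank r n -> padded_family n (family_of f) = f.
Proof.
by rewrite inE => /andP[/forallP f_part _]; apply/ffunP => i; rewrite !ffunE parts_ofK.
Qed.

Lemma padded_family_rank n F : family_of_rank n F -> padded_family n F \in Yr_rank r n.
Proof.
move=> F_rank; have [/forallP F_part /eqP F_sum] := andP F_rank.
have sumn_le i := sumn_le_rank i F_rank.
rewrite inE; apply/andP; split.
  by apply/forallP => i; rewrite ffunE padded_partition_padded.
apply/eqP; rewrite -[RHS]F_sum; apply: eq_bigr => i _.
by rewrite ffunE psize_padded //; case/andP: (F_part i).
Qed.

Lemma padded_familyK n F : family_of_rank n F -> family_of (padded_family n F) = F.
Proof.
move=> F_rank; apply/ffunP => i; rewrite !ffunE paddedK ?(sumn_le_rank i F_rank) //.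
by case/andP: (family_of_rank_part i F_rank).
Qed.

Definition Yr_rank_with k P := [set f in Yr_rank r k | P (family_of f)].

Lemma Yr_rank_withT k : Yr_rank_with k predT = Yr_rank r k.
Proof. by apply/setP => f; rewrite inE andbT. Qed.

Lemma card_Yr_rank_withC k P :
  #|Yr_rank_with k P| + #|Yr_rank_with k (predC P)| = pY r k.
Proof.
rewrite /pY -(cardsID [set f | P (family_of f)] (Yr_rank r k)); congr (_ + _).
  by apply: eq_card => f; rewrite !inE.
by apply: eq_card => f; rewrite !inE andbC.
Qed.

Lemma leq_card_Yr_rank_with k k' P Q (g : family -> family) :
    {in [pred F | family_of_rank k F && P F], forall F,
      family_of_rank k' (g F) && Q (g F)} ->
    {in [pred F | family_of_rank k F && P F] &, injective g} ->
  #|Yr_rank_with k P| <= #|Yr_rank_with k' Q|.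
Proof.
move=> g_maps g_inj.
pose h (f : {ffun 'I_r -> k.-tuple 'I_k.+1}) := padded_family k' (g (family_of f)).
have dom_of f :
  f \in Yr_rank_with k P -> family_of f \in [pred F | family_of_rank k F && P F].
  by case/setIdP=> /family_of_rank_of f_rank f_P; rewrite inE f_rank.
rewrite -(@card_in_imset _ _ h).
  apply/subset_leq_card/subsetP => _ /imsetP[f /dom_of /g_maps /andP[g_rank g_Q] ->].
  by rewrite inE padded_family_rank // padded_familyK.
move=> f1 f2 f1_P f2_P /(congr1 (@family_of k')).
have [F1 F2] := (dom_of _ f1_P, dom_of _ f2_P).
have /andP[rank1 _] := g_maps _ F1; have /andP[rank2 _] := g_maps _ F2.
rewrite !padded_familyK // => /(g_inj _ _ F1 F2) /(congr1 (padded_family k)).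
by rewrite !family_ofK //; [move: f2_P | move: f1_P] => /setIdP[].
Qed.

Definition set_fam F i s : family := [ffun j => if j == i then s else F j].

Lemma set_fam_rank k k' F i s :
  family_of_rank k F -> is_partition s -> k + sumn s = k' + sumn (F i) ->
  family_of_rank k' (set_fam F i s).
Proof.
case/andP=> /forallP F_part /eqP F_sum s_part sum_eq; apply/andP; split.
  by apply/forallP => j; rewrite ffunE; case: ifP.
rewrite (bigD1 i) //= ffunE eqxx.
rewrite (eq_bigr (fun j => sumn (F j))) => [|j /negbTE j_i]; last by rewrite ffunE j_i.
by move: F_sum sum_eq; rewrite (bigD1 i) //=; lia.
Qed.

Lemma set_fam_inj F G i s t :
  set_fam F i s = set_fam G i t -> F i = G i -> F = G.
Proof.
move=> eqFG eq_i; apply/ffunP => j; case: (eqVneq j i) => [-> //|/negbTE j_i].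
by have := congr1 (fun H : family => H j) eqFG; rewrite !ffunE j_i.
Qed.

Lemma leq_card_set_fam k k' i P Q (h : seq nat -> seq nat) :
    (forall F, family_of_rank k F -> P F ->
      [/\ is_partition (h (F i)), k + sumn (h (F i)) = k' + sumn (F i)
        & Q (set_fam F i (h (F i)))]) ->
    {in [pred F | family_of_rank k F && P F] &,
      forall F G, h (F i) = h (G i) -> F i = G i} ->
  #|Yr_rank_with k P| <= #|Yr_rank_with k' Q|.
Proof.
move=> h_maps h_inj; apply: (leq_card_Yr_rank_with (g := fun F => set_fam F i (h (F i)))).
  move=> F /andP[F_rank /(h_maps _ F_rank)[h_part h_sum h_Q]].
  by rewrite h_Q andbT (set_fam_rank F_rank).
move=> F G F_dom G_dom eqFG; apply: (set_fam_inj eqFG); apply: h_inj => //.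
by have := congr1 (fun H : family => H i) eqFG; rewrite !ffunE eqxx.
Qed.

End Families.

Lemma rcons_take_last1 s : last 0 s = 1 -> rcons (take (size s).-1 s) 1 = s.
Proof.
case/lastP: s => // s x; rewrite last_rcons => ->.
by rewrite size_rcons -[X in take _ X]cats1 take_size_cat.
Qed.

Section DeltaP.
Variables (r : nat) (i0 : 'I_r).
Local Notation family := {ffun 'I_r -> seq nat}.

(* The smallest part of a partition is its last one. *)
Definition has_part1 (F : family) : bool := last 0 (F i0) == 1.

Lemma leq_pY_card_part1 k : pY r k <= #|Yr_rank_with k.+1 has_part1|.
Proof.
rewrite /pY -Yr_rank_withT; apply: (leq_card_set_fam (i := i0) (h := rcons^~ 1)).
  move=> F F_rank _; rewrite /has_part1 ffunE eqxx last_rcons sumn_rcons.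
  split; [exact/is_partition_rcons1/(family_of_rank_part _ F_rank)|lia|by []].
by move=> F G _ _; apply: rcons_injl.
Qed.

Lemma leq_card_part1_pY k : #|Yr_rank_with k.+1 has_part1| <= pY r k.
Proof.
rewrite /pY -Yr_rank_withT.
apply: (leq_card_set_fam (i := i0) (h := fun s => take (size s).-1 s)).
  move=> F F_rank /eqP/rcons_take_last1; move: (take _ _) => t F_i0.
  have := family_of_rank_part i0 F_rank; rewrite -F_i0 sumn_rcons.
  by move=> /is_partition_rconsK; split=> //; lia.
move=> F G /andP[_ /eqP F_last] /andP[_ /eqP G_last] eq_take.
by rewrite -(rcons_take_last1 F_last) -(rcons_take_last1 G_last) eq_take.
Qed.

Lemma card_no_part1_pY k :
  pY r k.+1 = #|Yr_rank_with k.+1 (predC has_part1)| + pY r k.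
Proof.
rewrite -(card_Yr_rank_withC k.+1 has_part1) addnC; congr (_ + _).
by apply/eqP; rewrite eqn_leq leq_card_part1_pY leq_pY_card_part1.
Qed.

Lemma family_of_rank0 (F : family) i : family_of_rank 0 F -> F i = [::].
Proof.
move=> F_rank; have := sumn_le_rank i F_rank; rewrite leqn0.
by have /andP[_] := family_of_rank_part i F_rank; case: (F i) => //= x s /andP[]; lia.
Qed.

Lemma dpZ_card_no_part1 (k : nat) : dpZ r k%:Z = #|Yr_rank_with k (predC has_part1)|.
Proof.
case: k => [|k]; last first.
  by rewrite /dpZ -addn1 PoszD addrK /= addn1 card_no_part1_pY PoszD addrK.
have no_part1_0 : #|Yr_rank_with 0 has_part1| = 0.
  apply: eq_card0 => f; apply/negbTE/setIdP => -[].
  by move=> /family_of_rank_of/(family_of_rank0 i0); rewrite /has_part1 => ->.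
by rewrite /dpZ /= -(card_Yr_rank_withC 0 has_part1) no_part1_0 add0n subr0.
Qed.

Lemma leq_card_no_part1_succ i1 k : i1 != i0 ->
  #|Yr_rank_with k (predC has_part1)| <= #|Yr_rank_with k.+1 (predC has_part1)|.
Proof.
move=> i1_i0; apply: (leq_card_set_fam (i := i1) (h := rcons^~ 1)).
  move=> F F_rank; rewrite /= /has_part1 ffunE (ifN_eqC _ _ i1_i0) sumn_rcons.
  by split=> //; [exact/is_partition_rcons1/(family_of_rank_part _ F_rank) | lia].
by move=> F G _ _; apply: rcons_injl.
Qed.

Lemma leq_card_no_part1_rank0 n : 1 < n ->
  #|Yr_rank_with 0 (predC has_part1)| <= #|Yr_rank_with n (predC has_part1)|.
Proof.
move=> n_gt1; apply: (leq_card_set_fam (i := i0) (h := fun=> [:: n])).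
  move=> F F_rank _; rewrite /= /has_part1 ffunE eqxx (family_of_rank0 i0 F_rank) /=.
  by split; [rewrite /is_partition /=; lia | lia | lia].
by move=> F G /andP[F_rank _] /andP[G_rank _] _; rewrite !(family_of_rank0 i0).
Qed.

End DeltaP.

Lemma leq_card_Y1_no_part1 k :
  #|Yr_rank_with k.+1 (predC (has_part1 (@ord0 0)))|
    <= #|Yr_rank_with k.+2 (predC (has_part1 (@ord0 0)))|.
Proof.
have nonempty (F : {ffun 'I_1 -> seq nat}) : family_of_rank k.+1 F -> F ord0 != [::].
  by case/andP=> _; rewrite big_ord1; apply: contraTneq => ->.
apply: (leq_card_set_fam (i := ord0) (h := incr_nth^~ 0)).
  move=> F /[dup] F_rank /nonempty; rewrite /= /has_part1 ffunE eqxx.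
  have := family_of_rank_part ord0 F_rank.
  case: (F ord0) => [//|x s] /[dup] /is_partition_incr_head x_s_part.
  case/andP=> _ /andP[x_pos _] _ last_x_s; split=> //=; first lia.
  by case: s {x_s_part} last_x_s => //=; lia.
move=> F G /andP[/nonempty F_nil _] /andP[/nonempty G_nil _].
by case: (F ord0) (G ord0) F_nil G_nil => [|x s] [|y t] //= _ _ [-> ->].
Qed.

Lemma dpZ_lt0 r k : (k < 0)%R -> dpZ r k = 0%R.
Proof.
have pZ_lt0 y : (y < 0)%R -> pZ r y = 0%R by case: y.
by move=> k_lt0; rewrite /dpZ !pZ_lt0 //; lia.
Qed.

Lemma dpZ_ge0 r (k : nat) : 0 < r -> (0 <= dpZ r k%:Z)%R.
Proof. by case: r => // r _; rewrite (dpZ_card_no_part1 ord0). Qed.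

Lemma dpZ_homo r :
  1 < r -> {homo (fun k : nat => dpZ r k%:Z) : m n / m <= n >-> (m <= n)%R}.
Proof.
case: r => [|[|r]] // _ m n le_mn; rewrite !(dpZ_card_no_part1 ord0) lez_nat.
have max_neq0 : @ord_max r.+1 != ord0 by [].
have succ_step k := leq_card_no_part1_succ k max_neq0.
exact: (homo_leq (r := leq) leqnn leq_trans succ_step le_mn).
Qed.

Lemma dpZ1_homo m n : 0 < m <= n -> (dpZ 1 m%:Z <= dpZ 1 n%:Z)%R.
Proof.
case: m n => [|m] [|n] //= le_mn; rewrite !(dpZ_card_no_part1 ord0) lez_nat.
exact: (homo_leq (r := leq) leqnn leq_trans leq_card_Y1_no_part1).
Qed.

Lemma dpZ1_rank0 n : 1 < n -> (dpZ 1 0 <= dpZ 1 n%:Z)%R.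
Proof.
by move=> n_gt1; rewrite !(dpZ_card_no_part1 ord0) lez_nat leq_card_no_part1_rank0.
Qed.

Theorem proposition6p4 (r n j : nat) :
  (1 <= r)%N -> (1 <= n)%N -> (1 <= j <= n)%N ->
  (dpZ r (n%:Z - j%:Z - (r == 1%N)%:Z) <= dpZ r n%:Z)%R.
Proof.
move=> r_gt0 n_gt0 /andP[j_gt0 le_j_n].
have [r_lt1|r_gt1|->] := ltngtP r 1; first by rewrite ltnNge r_gt0 in r_lt1.
- rewrite (_ : (_ - _ - _)%R = Posz (n - j)); last by lia.
  by apply: dpZ_homo; rewrite ?leq_subr.
- have [lt_j1_n|gt_j1_n|eq_j1_n] := ltngtP j.+1 n.
  + rewrite (_ : (_ - _ - _)%R = Posz (n - j.+1)); last by lia.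
    by apply: dpZ1_homo; lia.
  + by rewrite dpZ_lt0 ?dpZ_ge0 //; lia.
  + by rewrite (_ : (_ - _ - _)%R = Posz 0); [apply: dpZ1_rank0 | ]; lia.
Qed.
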